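(* Let $k\ge 0$, $m=2k+1$, and $ER_m(\hat K)=P_m(\hat K)+\mathrm{span}\{\hat x^{m}\hat y-\hat x\hat y^{m},\ \hat x^{m+1}-\hat y^{m+1}\}$. Suppose $\hat v\in ER_m(\hat K)$ satisfies $\int_{\hat e}\hat v\,q\,ds=0$ for every $q\in P_{2k}(\hat e)$ and every edge $\hat e$ of $\hat K$, and $\hat v$ vanishes at all points of $I$. Then $\hat v\equiv 0$.
   Context: $\hat K=[-1,1]^2$; $P_n(M)$ denotes polynomials of degree $\le n$ on $M$ (for an edge, polynomials of degree $\le n$ in the edge variable). $I$ is a set of $(2k-1)(k-1)$ interior points of $\hat K$ unisolvent for $P_{2k-3}(\hat K)$ (every polynomial in $P_{2k-3}(\hat K)$ is uniquely determined by its values on $I$); $I=\emptyset$ when $k\le 1$. *)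

From Stdlib Require Import Reals List.
Import ListNotations.
Open Scope R_scope.

Definition inK (x y : R) : Prop := -1 <= x <= 1 /\ -1 <= y <= 1.

Definition poly2 (n : nat) (c : nat -> nat -> R) (x y : R) : R :=
  sum_f_R0 (fun i => sum_f_R0 (fun j => c i j * x ^ i * y ^ j) (n - i)) n.

Definition inP2 (n : nat) (f : R -> R -> R) : Prop :=
  exists c : nat -> nat -> R, forall x y, inK x y -> f x y = poly2 n c x y.

Definition inER (m : nat) (f : R -> R -> R) : Prop :=
  exists (p : R -> R -> R) (a b : R), inP2 m p /\
    forall x y, inK x y ->
      f x y = p x y + a * (x ^ m * y - x * y ^ m) + b * (x ^ (S m) - y ^ (S m)).

Definition poly1 (n : nat) (d : nat -> R) (t : R) : R :=
  sum_f_R0 (fun i => d i * t ^ i) n.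

Definition edges : list (R -> R * R) :=
  [ (fun t => (t, -1)); (fun t => (1, t)); (fun t => (t, 1)); (fun t => (-1, t)) ].

Definition unisolvent (n : nat) (I : list (R * R)) : Prop :=
  forall p1 p2 : R -> R -> R, inP2 n p1 -> inP2 n p2 ->
    (forall z, In z I -> p1 (fst z) (snd z) = p2 (fst z) (snd z)) ->
    forall x y, inK x y -> p1 x y = p2 x y.

(* Write v (on K) as a bivariate polynomial through its coefficient table c.
   Membership in ER_m means: total degree at most m+1, the degree-(m+1)
   coefficients are antisymmetric (c(i,j) = -c(j,i)) and vanish when i, j >= 2.
   On each edge the trace of v is a polynomial of degree at most 2k+2 orthogonal
   to P_(2k).  A one-variable lemma (four_edges_eq0) combines: a polynomial of
   degree <= n orthogonal to P_n is zero; one of degree <= n+1 (n even) is odd;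
   one of degree <= n+2 vanishing at both ends is zero.  The antisymmetry links
   the top coefficients of the four traces, which forces the vertex values and
   then all traces to vanish.  Dividing twice by the bubble t^2 - 1 gives
   v = (y^2-1)(x^2-1) Q with deg Q <= 2k-3 (the vanishing inner top coefficients
   lower the degree), and Q vanishes on the interior points I, hence is zero by
   unisolvence of I for P_(2k-3) (or trivially when k <= 1). *)

From Stdlib Require Import Reals List Lra.
Open Scope R_scope.
From Coquelicot Require Coquelicot.
From mathcomp Require all_boot all_order all_algebra Rstruct zify ring lra.

Module IntervalIntegral.
Import Coquelicot.Coquelicot.

(* A continuous function that is nonnegative on (a,b) and has zero integral
   vanishes on (a,b): otherwise it is positive on a small subinterval, whose
   contribution to the integral is positive. *)
Lemma RInt_nonneg_eq0 (f : R -> R) (a b : R) : a < b ->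
  (forall x, a <= x <= b -> continuous f x) ->
  (forall x, a < x < b -> 0 <= f x) ->
  RInt f a b = 0 -> forall x, a < x < b -> f x = 0.
Proof.
intros Hab Hcont Hpos Hint x0 Hx0.
destruct (Req_dec (f x0) 0) as [E|Hneq]; [exact E|exfalso].
assert (Hfx0 : 0 < f x0) by (generalize (Hpos x0 Hx0); lra).
pose (eps := mkposreal _ (Rmult_lt_0_compat _ _ Hfx0 (Rinv_0_lt_compat 2 ltac:(lra)))).
assert (Hcx0 := Hcont x0 ltac:(lra)).
destruct (proj1 (filterlim_locally f (f x0)) Hcx0 eps) as [del Hdel].
assert (Hdel0 := cond_pos del).
pose (d := Rmin (del/2) (Rmin ((x0-a)/2) ((b-x0)/2))).
assert (Hd1 : d <= del/2) by apply Rmin_l.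
assert (Hd2 : d <= (x0-a)/2) by (eapply Rle_trans; [apply Rmin_r|apply Rmin_l]).
assert (Hd3 : d <= (b-x0)/2) by (eapply Rle_trans; [apply Rmin_r|apply Rmin_r]).
assert (Hd0 : 0 < d) by (unfold d; repeat apply Rmin_glb_lt; lra).
assert (Hex : forall u w, a <= u -> u <= w -> w <= b -> ex_RInt f u w).
{ intros u w H1 H2 H3. apply (@ex_RInt_continuous R_CompleteNormedModule).
  intros z Hz. apply Hcont.
  rewrite Rmin_left in Hz by lra. rewrite Rmax_right in Hz by lra. lra. }
(* On (x0-d, x0+d) the function exceeds f x0 / 2. *)
assert (Hmid : 0 < RInt f (x0 - d) (x0 + d)).
{ apply RInt_gt_0; [lra| |intros y Hy; apply Hcont; lra].
  intros y Hy.
  assert (Hball : ball x0 del y).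
  { unfold ball; simpl; unfold AbsRing_ball, abs, minus, plus, opp; simpl.
    apply Rabs_def1; lra. }
  specialize (Hdel y Hball).
  unfold ball in Hdel; simpl in Hdel.
  unfold AbsRing_ball, abs, minus, plus, opp in Hdel; simpl in Hdel.
  apply Rabs_def2 in Hdel. unfold eps in Hdel; simpl in Hdel. lra. }
assert (Hleft : 0 <= RInt f a (x0 - d)).
{ apply RInt_ge_0; [lra| apply Hex; lra | intros y Hy; apply Hpos; lra]. }
assert (Hright : 0 <= RInt f (x0 + d) b).
{ apply RInt_ge_0; [lra| apply Hex; lra | intros y Hy; apply Hpos; lra]. }
assert (C1 := RInt_Chasles f a (x0 - d) (x0 + d)
                ltac:(apply Hex; lra) ltac:(apply Hex; lra)).
assert (C2 := RInt_Chasles f a (x0 + d) b ltac:(apply Hex; lra) ltac:(apply Hex; lra)).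
unfold plus in C1, C2; simpl in C1, C2. lra.
Qed.

Lemma RInt_reflect (f : R -> R) (a : R) :
  ex_RInt f (-a) a -> RInt (fun t => f (-t)) (-a) a = RInt f (-a) a.
Proof.
intros Hf.
assert (Hswap : ex_RInt f a (-a)) by (apply ex_RInt_swap; exact Hf).
assert (Hrefl : ex_RInt (fun t => f (-t)) (-a) a).
{ assert (H1 : ex_RInt f (- - a) (-a)) by (rewrite Ropp_involutive; exact Hswap).
  apply ex_RInt_comp_opp in H1. apply ex_RInt_opp in H1.
  eapply ex_RInt_ext; [|exact H1]. intros x _. simpl. unfold opp; simpl. ring. }
assert (H := RInt_comp_lin f (-1) 0 (-a) a).
replace (-1 * - a + 0) with a in H by ring.
replace (-1 * a + 0) with (-a) in H by ring.
specialize (H Hswap).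
rewrite <- (opp_RInt_swap f (-a) a Hf) in H.
rewrite (RInt_ext _ (fun y => opp (f (-y)))) in H.
2:{ intros x _. unfold scal, opp; simpl. unfold mult; simpl.
    replace (-1 * x + 0) with (-x) by ring. ring. }
assert (E : RInt (fun y => opp (f (-y))) (-a) a = - RInt (fun y => f (-y)) (-a) a)
  by exact (RInt_opp _ _ _ Hrefl).
rewrite E in H. unfold opp in H; simpl in H. lra.
Qed.

End IntervalIntegral.

Module EdgeElement.
Import Coquelicot.Coquelicot.
Import all_boot all_order all_algebra Rstruct zify ring lra.
Import Order.TTheory GRing.Theory Num.Theory.
Local Open Scope ring_scope.
Set Implicit Arguments.
Unset Strict Implicit.

Lemma horner_continuous (p : {poly R}) (x : R) : continuous (fun t => p.[t]) x.
Proof.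
elim/poly_ind: p => [|p c IH].
  have -> : (fun t : R => (0 : {poly R}).[t]) = (fun _ => 0).
    by apply: FunctionalExtensionality.functional_extensionality => t; rewrite horner0.
  exact: continuous_const.
have -> : (fun t : R => (p * 'X + c%:P).[t]) = (fun t => plus (mult p.[t] t) c).
  by apply: FunctionalExtensionality.functional_extensionality => t; rewrite hornerMXaddC.
apply: continuous_plus; last exact: continuous_const.
by apply: continuous_mult => //; exact: continuous_id.
Qed.

Lemma horner_ex_RInt (p : {poly R}) (a b : R) : ex_RInt (fun t => p.[t]) a b.
Proof. by apply: ex_RInt_continuous => z _; apply: horner_continuous. Qed.

Definition int11 (p : {poly R}) : R := RInt (fun t => p.[t]) (-1) 1.

Lemma int11_ext (p q : {poly R}) : (forall t, p.[t] = q.[t]) -> int11 p = int11 q.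
Proof. by move=> Hpq; apply: RInt_ext => t _; rewrite Hpq. Qed.

Lemma int11D (p q : {poly R}) : int11 (p + q) = int11 p + int11 q.
Proof.
rewrite /int11 -[RHS](RInt_plus _ _ _ _ (horner_ex_RInt p _ _) (horner_ex_RInt q _ _)).
by apply: RInt_ext => t _; rewrite hornerD.
Qed.

Lemma int11N (p : {poly R}) : int11 (- p) = - int11 p.
Proof.
rewrite /int11 -[RHS](RInt_opp _ _ _ (horner_ex_RInt p _ _)).
by apply: RInt_ext => t _; rewrite hornerN.
Qed.

Definition mirror (p : {poly R}) : {poly R} := \poly_(i < size p) ((-1) ^+ i * p`_i).

Lemma horner_mirror (p : {poly R}) (t : R) : (mirror p).[t] = p.[- t].
Proof.
rewrite horner_poly horner_coef; apply: eq_bigr => i _.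
by rewrite [(- t) ^+ i]exprNn mulrCA mulrA.
Qed.

Lemma coef_mirror (p : {poly R}) (i : nat) : (mirror p)`_i = (-1) ^+ i * p`_i.
Proof.
rewrite coef_poly; case: ltnP => // Hi.
by rewrite (leq_sizeP _ _ (leqnn _) _ Hi) mulr0.
Qed.

Lemma int11_mirror (p : {poly R}) : int11 (mirror p) = int11 p.
Proof.
rewrite /int11 (RInt_ext _ (fun t => p.[- t])); last by move=> t _; rewrite horner_mirror.
exact: (IntervalIntegral.RInt_reflect (fun t => p.[t]) 1 (horner_ex_RInt p _ _)).
Qed.

Lemma poly_eq0_on_interval (p : {poly R}) (a b : R) : a < b ->
  (forall t, a < t < b -> p.[t] = 0) -> p = 0.
Proof.
move=> Hab Hzero.
pose pts := [seq a + (b - a) / (i.+2)%:R | i <- iota 0 (size p)].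
apply: (@roots_geq_poly_eq0 _ p pts); last by rewrite size_map size_iota.
- apply/allP => x /mapP[i _ ->]; apply/eqP; apply: Hzero.
  have Hw0 : 0 < (i.+2)%:R^-1 :> R by rewrite invr_gt0 ltr0n.
  have Hw1 : (i.+2)%:R^-1 < 1 :> R by rewrite invf_lt1 ?ltr0n // ltr1n.
  rewrite mulrC; move: ((i.+2)%:R^-1) Hw0 Hw1 => w Hw0 Hw1.
  apply/andP; split; nra.
- rewrite map_inj_uniq ?iota_uniq // => i j /addrI /mulfI.
  rewrite subr_eq0 eq_sym (lt_eqF Hab) => /(_ isT) /invr_inj /eqP.
  by rewrite eqr_nat => /eqP [].
Qed.

Lemma int11_nonneg_eq0 (p : {poly R}) :
  (forall t, -1 < t < 1 -> 0 <= p.[t]) -> int11 p = 0 -> p = 0.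
Proof.
move=> Hpos Hint; apply: (@poly_eq0_on_interval p (-1) 1); first by rewrite gtrN.
move=> t /andP[/RltP Ht1 /RltP Ht2].
have Hlt : Rlt (-1) 1 by apply/RltP; rewrite gtrN.
apply: (IntervalIntegral.RInt_nonneg_eq0 _ _ _ Hlt _ _ Hint t (conj Ht1 Ht2)).
- by move=> x _; apply: horner_continuous.
- by move=> x [/RltP Hx1 /RltP Hx2]; apply/RleP; apply: Hpos; rewrite Hx1 Hx2.
Qed.

Definition orth (n : nat) (T : {poly R}) : Prop :=
  forall q : {poly R}, (size q <= n.+1)%N -> int11 (T * q) = 0.

Lemma orthD {n : nat} {T1 T2 : {poly R}} : orth n T1 -> orth n T2 -> orth n (T1 + T2).
Proof. by move=> H1 H2 q Hq; rewrite mulrDl int11D H1 // H2 // addr0. Qed.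

Lemma orthB {n : nat} {T1 T2 : {poly R}} : orth n T1 -> orth n T2 -> orth n (T1 - T2).
Proof. by move=> H1 H2 q Hq; rewrite mulrDl mulNr int11D int11N H1 // H2 // subrr. Qed.

Lemma orth_mirror {n : nat} {T : {poly R}} : orth n T -> orth n (mirror T).
Proof.
move=> HT q Hq.
rewrite (@int11_ext _ (mirror (T * mirror q))); last first.
  by move=> t; rewrite horner_mirror !hornerM !horner_mirror opprK.
by rewrite int11_mirror HT // (leq_trans (size_poly _ _) Hq).
Qed.

(* Degree at most n and orthogonal to P_n: T is orthogonal to itself. *)
Lemma orth_small_eq0 (n : nat) (T : {poly R}) :
  (size T <= n.+1)%N -> orth n T -> T = 0.
Proof.
move=> Hsize HT; apply/eqP; rewrite -[T == 0]orbb -mulf_eq0; apply/eqP.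
apply: int11_nonneg_eq0; last exact: HT.
by move=> t _; rewrite hornerM -expr2 sqr_ge0.
Qed.

Lemma size_drop_top {T : {poly R}} {n : nat} :
  (size T <= n.+1)%N -> T`_n = 0 -> (size T <= n)%N.
Proof.
move=> Hsize Htop; apply/leq_sizeP => j; rewrite leq_eqVlt => /orP[/eqP <- //|Hj].
exact: (leq_sizeP _ _ Hsize).
Qed.

(* For n even, a polynomial of degree at most n+1 orthogonal to P_n is odd
   (T + mirror T has degree at most n), so its end values are opposite. *)
Lemma orth_odd_ends {n : nat} {T : {poly R}} : ~~ odd n ->
  (size T <= n.+2)%N -> orth n T -> T.[1] + T.[-1] = 0.
Proof.
move=> Heven Hsize HT.
suff E : T + mirror T = 0.
  by have := congr1 (horner^~ 1) E; rewrite hornerD horner_mirror horner0.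
apply: (@orth_small_eq0 n); last by apply: orthD => //; apply: orth_mirror.
apply: size_drop_top; first by rewrite (leq_trans (size_polyD _ _)) // geq_max Hsize
  (leq_trans (size_poly _ _)).
by rewrite coefD coef_mirror -signr_odd /= (negbTE Heven) expr1 mulN1r subrr.
Qed.

Definition bubble : {poly R} := 'X^2 - 1.

Lemma horner_bubble (t : R) : bubble.[t] = t ^+ 2 - 1.
Proof. by rewrite /bubble hornerD hornerN hornerXn hornerC. Qed.

Lemma size_bubble : size bubble = 3.
Proof. by rewrite /bubble -polyC1 size_XnsubC. Qed.

Lemma bubble_factor (p : {poly R}) : p.[1] = 0 -> p.[-1] = 0 ->
  p = (p %/ bubble) * bubble.
Proof.
move=> H1 Hm1; rewrite divpK //.
have -> : bubble = \prod_(z <- [:: 1; -1]) ('X - z%:P).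
  by rewrite big_cons big_seq1 /bubble polyCN opprK polyC1; ring.
apply: uniq_roots_dvdp; first by rewrite /= /root H1 Hm1 eqxx.
rewrite uniq_rootsE /= inE andbT; apply/eqP => E.
by move: E; lra.
Qed.

Lemma size_div_bubble (p : {poly R}) : size (p %/ bubble) = (size p - 2)%N.
Proof. by rewrite size_divp -?size_poly_eq0 size_bubble. Qed.

(* A polynomial of degree at most n+2, orthogonal to P_n and vanishing at both
   ends is zero: with T = U * bubble, the integral of -T*U = U^2 (1 - t^2) is 0. *)
Lemma orth_ends_eq0 (n : nat) (T : {poly R}) : (size T <= n.+3)%N -> orth n T ->
  T.[1] = 0 -> T.[-1] = 0 -> T = 0.
Proof.
move=> Hsize HT H1 Hm1.
set U := T %/ bubble.
have EU : T = U * bubble := bubble_factor H1 Hm1.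
have HU : (size U <= n.+1)%N by rewrite size_div_bubble leq_subLR.
suff : U * U * bubble = 0.
  by rewrite EU => /eqP; rewrite !mulf_eq0 orbb => /orP[/eqP->|/eqP->];
    rewrite ?mul0r ?mulr0.
apply/eqP; rewrite -oppr_eq0; apply/eqP; apply: int11_nonneg_eq0.
- move=> t /andP[Ht1 Ht2]; rewrite hornerN !hornerM horner_bubble.
  rewrite -mulrN; apply: mulr_ge0; first by rewrite -expr2 sqr_ge0.
  rewrite oppr_ge0; nra.
- by rewrite int11N -mulrA [U * bubble]mulrC mulrA -EU HT // oppr0.
Qed.

(* Four polynomials T1, T2, T3, T4 playing the role of the traces of a
   bivariate polynomial on the edges y = -1, x = 1, y = 1, x = -1 of the square
   (each parametrized increasingly), so that the end values agree at the four
   vertices. *)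
Lemma four_edges_eq0 (n : nat) (T1 T2 T3 T4 : {poly R}) : ~~ odd n ->
  (size T1 <= n.+3)%N -> (size T2 <= n.+3)%N ->
  (size T3 <= n.+3)%N -> (size T4 <= n.+3)%N ->
  orth n T1 -> orth n T2 -> orth n T3 -> orth n T4 ->
  T3`_n.+2 = T1`_n.+2 -> T2`_n.+2 = - T1`_n.+2 -> T4`_n.+2 = - T1`_n.+2 ->
  (T2 - T4 + T3 - T1)`_n.+1 = 0 ->
  T1.[1] = T2.[-1] -> T1.[-1] = T4.[-1] -> T3.[1] = T2.[1] -> T3.[-1] = T4.[1] ->
  [/\ T1 = 0, T2 = 0, T3 = 0 & T4 = 0].
Proof.
move=> Heven S1 S2 S3 S4 O1 O2 O3 O4 L3 L2 L4 Hsub V12 V14 V32 V34.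
have SD : forall T T' : {poly R},
    (size T <= n.+3)%N -> (size T' <= n.+3)%N -> (size (T + T')%R <= n.+3)%N.
  by move=> T T' HT HT'; rewrite (leq_trans (size_polyD _ _)) // geq_max HT.
have SN : forall T : {poly R}, (size (- T)%R <= n.+3)%N = (size T <= n.+3)%N.
  by move=> T; rewrite size_polyN.
(* Four sums/differences of degree at most n+1 are odd. *)
have top13 : (T1 - T3)`_n.+2 = 0 by rewrite coefB L3 subrr.
have top12 : (T1 + T2)`_n.+2 = 0 by rewrite coefD L2 subrr.
have top14 : (T1 + T4)`_n.+2 = 0 by rewrite coefD L4 subrr.
have top24 : (T2 - T4)`_n.+2 = 0 by rewrite coefB L2 L4 subrr.
have E13 := orth_odd_ends Heven
  (size_drop_top (SD _ _ S1 (etrans (SN T3) S3)) top13) (orthB O1 O3).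
have E12 := orth_odd_ends Heven (size_drop_top (SD _ _ S1 S2) top12) (orthD O1 O2).
have E14 := orth_odd_ends Heven (size_drop_top (SD _ _ S1 S4) top14) (orthD O1 O4).
have E24 := orth_odd_ends Heven
  (size_drop_top (SD _ _ S2 (etrans (SN T4) S4)) top24) (orthB O2 O4).
(* The alternating sum has degree at most n, hence vanishes. *)
have S_alt : (size (T2 - T4 + T3 - T1)%R <= n.+3)%N.
  by rewrite !SD ?SN.
have Z : T2 - T4 + T3 - T1 = 0.
  apply: (@orth_small_eq0 n); last by apply: orthB => //; apply: orthD => //; apply: orthB.
  apply: size_drop_top Hsub; apply: size_drop_top S_alt _.
  by rewrite !coefB coefD !coefB L2 L3 L4; ring.
have E_alt := congr1 (horner^~ 1) Z.
move: E13 E12 E14 E24 E_alt; rewrite /= !hornerD !hornerN horner0.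
move=> E13 E12 E14 E24 E_alt.
(* Hence all four vertex values vanish, and so do the traces. *)
have Va : T1.[1] = 0 by lra.
have Vb : T1.[-1] = 0 by lra.
have Vc : T3.[1] = 0 by lra.
have Vd : T3.[-1] = 0 by lra.
split; apply: (@orth_ends_eq0 n); rewrite // -?V12 -?V14 -?V32 -?V34 //.
Qed.

(* Bivariate polynomials are represented by coefficient tables
   c : nat -> nat -> R; ev2 s c x y = sum_{i,j < s} c i j x^i y^j. *)
Definition ev2 (s : nat) (c : nat -> nat -> R) (x y : R) : R :=
  \sum_(i < s) \sum_(j < s) c i j * x ^+ i * y ^+ j.

Definition deg_lt (s : nat) (c : nat -> nat -> R) : Prop :=
  forall i j, (s <= i + j)%N -> c i j = 0.

Definition transpose (c : nat -> nat -> R) : nat -> nat -> R := fun i j => c j i.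

Definition row (s : nat) (c : nat -> nat -> R) (i : nat) : {poly R} := \poly_(j < s) c i j.

Definition htrace (s : nat) (c : nat -> nat -> R) (y0 : R) : {poly R} :=
  \poly_(i < s) (row s c i).[y0].
Definition vtrace (s : nat) (c : nat -> nat -> R) (x0 : R) : {poly R} :=
  htrace s (transpose c) x0.

Lemma horner_row (s : nat) (c : nat -> nat -> R) (i : nat) (y : R) :
  (row s c i).[y] = \sum_(j < s) c i j * y ^+ j.
Proof. exact: horner_poly. Qed.

Lemma ev2_rows (s : nat) (c : nat -> nat -> R) (x y : R) :
  ev2 s c x y = \sum_(i < s) x ^+ i * (row s c i).[y].
Proof.
apply: eq_bigr => i _; rewrite horner_row mulr_sumr; apply: eq_bigr => j _.
by rewrite mulrCA mulrA.
Qed.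

Lemma horner_htrace (s : nat) (c : nat -> nat -> R) (y0 x : R) :
  (htrace s c y0).[x] = ev2 s c x y0.
Proof. by rewrite horner_poly ev2_rows; apply: eq_bigr => i _; rewrite mulrC. Qed.

Lemma ev2_transpose (s : nat) (c : nat -> nat -> R) (x y : R) :
  ev2 s (transpose c) y x = ev2 s c x y.
Proof.
rewrite /ev2 exchange_big; apply: eq_bigr => i _; apply: eq_bigr => j _.
by rewrite /transpose mulrAC.
Qed.

Lemma horner_vtrace (s : nat) (c : nat -> nat -> R) (x0 y : R) :
  (vtrace s c x0).[y] = ev2 s c x0 y.
Proof. by rewrite /vtrace horner_htrace ev2_transpose. Qed.

Lemma deg_lt_transpose (s : nat) (c : nat -> nat -> R) :
  deg_lt s c -> deg_lt s (transpose c).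
Proof. by move=> Hc i j Hij; rewrite /transpose Hc // addnC. Qed.

Lemma deg_lt_mono (s t : nat) (c : nat -> nat -> R) :
  (s <= t)%N -> deg_lt s c -> deg_lt t c.
Proof. by move=> Hst Hc i j Hij; apply: Hc; exact: leq_trans Hst Hij. Qed.

Lemma size_row (t s : nat) (c : nat -> nat -> R) (i : nat) :
  deg_lt t c -> (size (row s c i) <= t - i)%N.
Proof.
move=> Hc; apply/leq_sizeP => j Hj; rewrite coef_poly; case: ifP => // _.
by apply: Hc; lia.
Qed.

Lemma coef_htrace_top (p : nat) (c : nat -> nat -> R) (y0 : R) :
  deg_lt p.+2 c -> (htrace p.+2 c y0)`_p.+1 = c p.+1 0.
Proof.
move=> Hc; rewrite coef_poly ltnSn horner_row big_ord_recl expr0 mulr1 big1 ?addr0 //.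
by move=> j _; rewrite Hc ?mul0r //= /bump /=; lia.
Qed.

Lemma coef_htrace_next (p : nat) (c : nat -> nat -> R) (y0 : R) :
  deg_lt p.+2 c -> (htrace p.+2 c y0)`_p = c p 0 + c p 1 * y0.
Proof.
move=> Hc; rewrite coef_poly ltnS leqnSn horner_row big_ord_recl expr0 mulr1.
rewrite big_ord_recl big1 ?addr0 /=; first by rewrite expr1.
by move=> j _; rewrite Hc ?mul0r // /bump /=; lia.
Qed.

Lemma row_root (s : nat) (c : nat -> nat -> R) (y0 : R) (i : nat) :
  deg_lt s c -> htrace s c y0 = 0 -> (row s c i).[y0] = 0.
Proof.
move=> Hc Htr; case: (ltnP i s) => Hi.
  by have := congr1 (fun p : {poly R} => p`_i) Htr; rewrite coef0 coef_poly Hi.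
suff -> : row s c i = 0 by rewrite horner0.
apply/eqP; rewrite -size_poly_leq0.
by apply: (leq_trans (size_row s i Hc)); lia.
Qed.

Lemma htraces_divide (t s : nat) (c : nat -> nat -> R) : (t <= s)%N -> deg_lt t c ->
  htrace s c 1 = 0 -> htrace s c (-1) = 0 ->
  exists c' : nat -> nat -> R, [/\ deg_lt (t - 2) c',
    (forall i j, (i + j + 3 = t)%N -> c' i j = c i (j + 2)%N) &
    forall x y, ev2 s c x y = (y ^+ 2 - 1) * ev2 s c' x y].
Proof.
move=> Hts Hc H1 Hm1.
have Hcs := deg_lt_mono Hts Hc.
pose quot i := row s c i %/ bubble.
have Hfac i : row s c i = quot i * bubble.
  exact: bubble_factor (row_root _ Hcs H1) (row_root _ Hcs Hm1).
have Hsize i : (size (quot i) <= t - i - 2)%N.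
  by rewrite size_div_bubble leq_sub2r // size_row.
exists (fun i j => (quot i)`_j); split.
- by move=> i j Hij; apply: (leq_sizeP _ _ (Hsize i)); lia.
- move=> i j Hij; have := congr1 (fun p : {poly R} => p`_(j + 2)) (Hfac i).
  rewrite /= coef_poly ifT; last by lia.
  move=> ->; rewrite mulrBr mulr1 coefB coefMXn ltnNge leq_addl /= addnK.
  by rewrite [X in _ - X](leq_sizeP _ _ (Hsize i)) ?subr0 //; lia.
- move=> x y; rewrite !ev2_rows mulr_sumr; apply: eq_bigr => i _.
  rewrite Hfac hornerM horner_bubble horner_row -(@horner_coef_wide _ s); last first.
    by apply: leq_trans (Hsize i) _; lia.
  ring.
Qed.

Lemma vtrace_quotient_eq0 (s : nat) (c c' : nat -> nat -> R) (x0 : R) :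
  (forall x y, ev2 s c x y = (y ^+ 2 - 1) * ev2 s c' x y) ->
  vtrace s c x0 = 0 -> vtrace s c' x0 = 0.
Proof.
move=> Hc Htr; have H12 : 1 < 2 :> R by rewrite ltr1n.
apply: (poly_eq0_on_interval H12).
move=> y /andP[Hy1 Hy2]; rewrite horner_vtrace.
have := congr1 (horner^~ y) Htr; rewrite horner_vtrace horner0 Hc => /eqP.
rewrite mulf_eq0 => /orP[/eqP Hbub|/eqP //]; exfalso.
move: Hbub; nra.
Qed.

Lemma bubble_factor2 (s : nat) (c : nat -> nat -> R) : deg_lt s c ->
  (forall i j, (2 <= i)%N -> (2 <= j)%N -> (i + j)%N = s.-1 -> c i j = 0) ->
  htrace s c 1 = 0 -> htrace s c (-1) = 0 -> vtrace s c 1 = 0 -> vtrace s c (-1) = 0 ->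
  exists cQ : nat -> nat -> R, deg_lt (s - 5) cQ /\
    forall x y, ev2 s c x y = (y ^+ 2 - 1) * ((x ^+ 2 - 1) * ev2 s cQ x y).
Proof.
move=> Hc Hinner Hy1 Hym1 Hx1 Hxm1.
have [c' [Hc' Htop' E']] := htraces_divide (leqnn s) Hc Hy1 Hym1.
have Hx1' := vtrace_quotient_eq0 E' Hx1.
have Hxm1' := vtrace_quotient_eq0 E' Hxm1.
have [c'' [Hc'' Htop'' E'']] :=
  htraces_divide (leq_subr 2 s) (deg_lt_transpose Hc') Hx1' Hxm1'.
exists (transpose c''); split.
- move=> i j Hij; rewrite /transpose.
  case: (boolP (i + j + 5 == s)%N) => [/eqP Hs|Hs]; last by apply: Hc''; lia.
  rewrite Htop''; last by lia.
  by rewrite /transpose Htop'; [apply: Hinner|]; lia.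
- by move=> x y; rewrite E' -ev2_transpose E'' ev2_transpose.
Qed.

Lemma edge_traces_eq0 (n : nat) (c : nat -> nat -> R) : ~~ odd n -> deg_lt n.+3 c ->
  c n.+2 0 = - c 0 n.+2 -> c n.+1 1 + c 1 n.+1 = 0 ->
  orth n (htrace n.+3 c (-1)) -> orth n (vtrace n.+3 c 1) ->
  orth n (htrace n.+3 c 1) -> orth n (vtrace n.+3 c (-1)) ->
  [/\ htrace n.+3 c (-1) = 0, vtrace n.+3 c 1 = 0,
      htrace n.+3 c 1 = 0 & vtrace n.+3 c (-1) = 0].
Proof.
move=> Heven Hc Htop Hnext O1 O2 O3 O4.
have Hct := deg_lt_transpose Hc.
apply: (four_edges_eq0 Heven _ _ _ _ O1 O2 O3 O4); rewrite ?size_poly ?horner_htrace //.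
- by rewrite !coef_htrace_top.
- by rewrite /vtrace !coef_htrace_top // Htop opprK.
- by rewrite /vtrace !coef_htrace_top // Htop opprK.
- rewrite /vtrace !coefB coefD !coefB !coef_htrace_next //.
  have -> : c n.+1 1 = - c 1 n.+1 by apply/eqP; rewrite -subr_eq0 opprK Hnext.
  rewrite /transpose; ring.
all: by rewrite ev2_transpose.
Qed.

Lemma sum_ord_shrink (F : nat -> R) (t s : nat) : (t <= s)%N ->
  (forall i, (t <= i)%N -> F i = 0) -> \sum_(i < s) F i = \sum_(i < t) F i.
Proof.
move=> Hts HF; rewrite [RHS](big_ord_widen _ _ Hts) [RHS]big_mkcond.
by apply: eq_bigr => i _; case: ltnP => // Hi; rewrite HF.
Qed.

Lemma ev2_shrink (s t : nat) (c : nat -> nat -> R) (x y : R) :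
  deg_lt t c -> (t <= s)%N -> ev2 s c x y = ev2 t c x y.
Proof.
move=> Hc Hts; rewrite /ev2.
rewrite (@sum_ord_shrink (fun i => \sum_(j < s) c i j * x ^+ i * y ^+ j) _ _ Hts);
  last first.
  move=> i Hi; apply: big1 => j _.
  by rewrite Hc ?mul0r //; apply: leq_trans Hi (leq_addr _ _).
apply: eq_bigr => i _; apply: (@sum_ord_shrink (fun j => c i j * x ^+ i * y ^+ j) _ _ Hts).
by move=> j Hj; rewrite Hc ?mul0r //; apply: leq_trans Hj (leq_addl _ _).
Qed.

Definition trunc (n : nat) (c : nat -> nat -> R) (i j : nat) : R :=
  if (i + j <= n)%N then c i j else 0.

Lemma trunc_high (n : nat) (c : nat -> nat -> R) (i j : nat) :
  (n < i + j)%N -> trunc n c i j = 0.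
Proof. by move=> Hij; rewrite /trunc leqNgt Hij. Qed.

Lemma poly2_ev2 (n : nat) (c : nat -> nat -> R) (x y : R) :
  poly2 n c x y = ev2 n.+1 (trunc n c) x y.
Proof.
rewrite /poly2 sum_f_R0E big_mkord; apply: eq_bigr => [[i Hi]] _ /=.
rewrite sum_f_R0E big_mkord.
have Hle : ((n - i).+1 <= n.+1)%N by rewrite ltnS leq_subr.
rewrite [RHS](@sum_ord_shrink (fun j => trunc n c i j * x ^+ i * y ^+ j) _ _ Hle);
  last first.
  by move=> j Hj; rewrite /trunc ifN ?mul0r // -ltnNge; lia.
by apply: eq_bigr => [[j Hj]] _ /=; rewrite /trunc ifT ?RpowE //; lia.
Qed.

Lemma ev2_poly2 (n s : nat) (c : nat -> nat -> R) (x y : R) :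
  deg_lt n.+1 c -> (n.+1 <= s)%N -> ev2 s c x y = poly2 n c x y.
Proof.
move=> Hc Hs; rewrite poly2_ev2 (ev2_shrink _ _ Hc Hs).
apply: eq_bigr => i _; apply: eq_bigr => j _; rewrite /trunc.
by case: leqP => // Hij; rewrite Hc.
Qed.

Lemma poly1_horner (n : nat) (q : {poly R}) (t : R) : (size q <= n.+1)%N ->
  poly1 n (fun i => q`_i) t = q.[t].
Proof.
move=> Hq; rewrite /poly1 sum_f_R0E big_mkord (horner_coef_wide _ Hq).
by apply: eq_bigr => i _; rewrite RpowE.
Qed.

Lemma ev2D (s : nat) (c1 c2 : nat -> nat -> R) (x y : R) :
  ev2 s (fun i j => c1 i j + c2 i j) x y = ev2 s c1 x y + ev2 s c2 x y.
Proof.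
rewrite /ev2 -big_split; apply: eq_bigr => i _; rewrite -big_split.
by apply: eq_bigr => j _; rewrite !mulrDl.
Qed.

Lemma ev2Z (s : nat) (a : R) (c : nat -> nat -> R) (x y : R) :
  ev2 s (fun i j => a * c i j) x y = a * ev2 s c x y.
Proof.
rewrite /ev2 mulr_sumr; apply: eq_bigr => i _; rewrite mulr_sumr.
by apply: eq_bigr => j _; rewrite !mulrA.
Qed.

Lemma ev2B (s : nat) (c1 c2 : nat -> nat -> R) (x y : R) :
  ev2 s (fun i j => c1 i j - c2 i j) x y = ev2 s c1 x y - ev2 s c2 x y.
Proof.
rewrite -[- ev2 s c2 x y]mulN1r -ev2Z -ev2D.
by apply: eq_bigr => i _; apply: eq_bigr => j _; rewrite mulN1r.
Qed.

Definition mono (i0 j0 i j : nat) : R := ((i == i0) && (j == j0))%:R.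

Lemma ev2_mono (s i0 j0 : nat) (x y : R) : (i0 < s)%N -> (j0 < s)%N ->
  ev2 s (mono i0 j0) x y = x ^+ i0 * y ^+ j0.
Proof.
move=> Hi Hj; rewrite /ev2 (bigD1 (Ordinal Hi)) //= (bigD1 (Ordinal Hj)) //=.
rewrite /mono !eqxx /= mul1r big1 ?addr0.
  rewrite big1 ?addr0 // => i /negbTE Hne; apply: big1 => j _.
  by rewrite -val_eqE /= in Hne; rewrite Hne /= !mul0r.
by move=> j /negbTE Hne; rewrite -val_eqE /= in Hne; rewrite Hne !mul0r.
Qed.

Lemma mono_swap (i0 j0 i j : nat) : mono i0 j0 i j = mono j0 i0 j i.
Proof. by rewrite /mono andbC. Qed.

Lemma mono_off (i0 j0 i j : nat) : (i != i0) || (j != j0) -> mono i0 j0 i j = 0.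
Proof. by rewrite /mono; case: eqP; case: eqP. Qed.

Definition er_table (m : nat) (cp : nat -> nat -> R) (a b : R) (i j : nat) : R :=
  trunc m cp i j + a * (mono m 1 i j - mono 1 m i j)
  + b * (mono m.+1 0 i j - mono 0 m.+1 i j).

(* The two extra generators are antisymmetric under exchanging x and y, so
   above degree m the table of an element of ER_m is antisymmetric. *)
Lemma er_table_antisym (m : nat) (cp : nat -> nat -> R) (a b : R) (i j : nat) :
  (m < i + j)%N -> er_table m cp a b i j + er_table m cp a b j i = 0.
Proof.
move=> Hij; rewrite /er_table !trunc_high; try lia.
rewrite (mono_swap m 1 j i) (mono_swap 1 m j i) (mono_swap m.+1 0 j i) (mono_swap 0 m.+1 j i).
by rewrite ?RplusE ?RminusE ?RmultE; ring.
Qed.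

Lemma inER_table (n : nat) (v : R -> R -> R) : inER n.+1 v ->
  exists c : nat -> nat -> R, [/\ deg_lt n.+3 c,
    c n.+2 0 = - c 0 n.+2, c n.+1 1 + c 1 n.+1 = 0,
    (forall i j, (2 <= i)%N -> (2 <= j)%N -> (i + j)%N = n.+2 -> c i j = 0) &
    forall x y, inK x y -> v x y = ev2 n.+3 c x y].
Proof.
case=> p [a [b [[cp Hp] Hv]]].
exists (er_table n.+1 cp a b); split.
- move=> i j Hij; rewrite /er_table RplusE RplusE trunc_high; last by lia.
  by rewrite !mono_off; try lia; rewrite ?RplusE ?RminusE ?RmultE; ring.
- by apply/eqP; rewrite -addr_eq0; apply/eqP; apply: er_table_antisym; lia.
- by apply: er_table_antisym; lia.
- move=> i j Hi Hj Hij; rewrite /er_table RplusE RplusE trunc_high; last by lia.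
  by rewrite !mono_off; try lia; rewrite ?RplusE ?RminusE ?RmultE; ring.
- move=> x y Hxy; rewrite Hv // Hp // !ev2D !ev2Z !ev2B !ev2_mono //.
  rewrite (ev2_shrink _ _ (@trunc_high n.+1 cp)) // -poly2_ev2.
  by rewrite !RpowE !expr1 !expr0 mulr1 mul1r.
Qed.

Lemma orth_of_moments (n : nat) (f : R -> R) (T : {poly R}) :
  (forall t, Rle (-1) t /\ Rle t 1 -> f t = T.[t]) ->
  (forall (d : nat -> R) (pr : Riemann_integrable (fun t => f t * poly1 n d t) (-1) 1),
     RiemannInt pr = 0) ->
  orth n T.
Proof.
move=> Hf Hmom q Hq.
pose g t := f t * poly1 n (fun i => q`_i) t.
have Eg t : Rlt (Rmin (-1) 1) t /\ Rlt t (Rmax (-1) 1) -> (T * q).[t] = g t.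
  rewrite Rmin_left ?Rmax_right => [Ht||]; try Lra.lra.
  by rewrite hornerM /g Hf ?poly1_horner //; Lra.lra.
have Hg : ex_RInt g (-1) 1 := ex_RInt_ext _ _ _ _ Eg (horner_ex_RInt (T * q) _ _).
have := Hmom (fun i => q`_i) (ex_RInt_Reals_0 _ _ _ Hg).
by rewrite -RInt_Reals => <-; apply: RInt_ext.
Qed.

Lemma edge_moments_factor (k : nat) (v : R -> R -> R) : inER (2 * k).+1 v ->
  (forall g, In g edges -> forall d : nat -> R,
     forall pr : Riemann_integrable
                   (fun t => v (fst (g t)) (snd (g t)) * poly1 (2 * k) d t) (-1) 1,
       RiemannInt pr = 0) ->
  exists cQ : nat -> nat -> R, deg_lt (2 * k - 2) cQ /\
    forall x y, inK x y -> v x y = (y ^+ 2 - 1) * ((x ^+ 2 - 1) * ev2 (2 * k).+3 cQ x y).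
Proof.
move=> /inER_table [c [Hc Htop Hnext Hinner Hv]] Hmom.
have Hedge t : Rle (-1) t /\ Rle t 1 ->
    [/\ inK t (-1), inK 1 t, inK t 1 & inK (-1) t].
  by rewrite /inK => Ht; split; Lra.lra.
have O1 : orth (2 * k) (htrace (2 * k).+3 c (-1)).
  apply: (orth_of_moments (f := fun t => v t (-1))); last exact: Hmom (or_introl erefl).
  by move=> t /Hedge[? _ _ _]; rewrite horner_htrace Hv.
have O2 : orth (2 * k) (vtrace (2 * k).+3 c 1).
  apply: (orth_of_moments (f := fun t => v 1 t)); last exact: Hmom _ (or_intror (or_introl erefl)).
  by move=> t /Hedge[_ ? _ _]; rewrite horner_vtrace Hv.
have O3 : orth (2 * k) (htrace (2 * k).+3 c 1).
  apply: (orth_of_moments (f := fun t => v t 1)); last first.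
    exact: Hmom _ (or_intror (or_intror (or_introl erefl))).
  by move=> t /Hedge[_ _ ? _]; rewrite horner_htrace Hv.
have O4 : orth (2 * k) (vtrace (2 * k).+3 c (-1)).
  apply: (orth_of_moments (f := fun t => v (-1) t)); last first.
    exact: Hmom _ (or_intror (or_intror (or_intror (or_introl erefl)))).
  by move=> t /Hedge[_ _ _ ?]; rewrite horner_vtrace Hv.
have Heven : ~~ odd (2 * k) by rewrite oddM.
have [Z1 Z2 Z3 Z4] := edge_traces_eq0 Heven Hc Htop Hnext O1 O2 O3 O4.
have [cQ [HcQ EQ]] := bubble_factor2 Hc Hinner Z3 Z1 Z2 Z4.
exists cQ; split; first by apply: deg_lt_mono HcQ; lia.
by move=> x y Hxy; rewrite Hv // EQ.
Qed.

Lemma ev2_zero (s : nat) (c : nat -> nat -> R) (x y : R) :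
  (forall i j, c i j = 0) -> ev2 s c x y = 0.
Proof. by move=> Hc; apply: big1 => i _; apply: big1 => j _; rewrite Hc !mul0r. Qed.

Lemma low_degree_eq0 (k s : nat) (I : list (R * R)) (cQ : nat -> nat -> R) :
  deg_lt (2 * k - 2) cQ -> (2 * k - 2 <= s)%N ->
  ((2 <= k)%coq_nat -> unisolvent (2 * k - 3) I) ->
  (forall z, In z I -> ev2 s cQ z.1 z.2 = 0) ->
  forall x y, inK x y -> ev2 s cQ x y = 0.
Proof.
move=> HcQ Hs Hunisolv Hvan x y Hxy.
case: (leqP k 1) => Hk.
  by apply: ev2_zero => i j; apply: HcQ; lia.
have Hdeg : deg_lt (2 * k - 3).+1 cQ by apply: deg_lt_mono HcQ; lia.
have Hzero : inP2 (2 * k - 3) (fun _ _ => 0).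
  exists (fun _ _ => 0) => x0 y0 _.
  by rewrite -(@ev2_poly2 _ (2 * k - 3).+1) ?ev2_zero.
have Hk2 : (2 <= k)%coq_nat by apply/ssrnat.leP.
apply: (Hunisolv Hk2 (fun x0 y0 => ev2 s cQ x0 y0) _ _ Hzero Hvan x y Hxy).
by exists cQ => x0 y0 _; rewrite (ev2_poly2 _ _ Hdeg) //; lia.
Qed.

Lemma bubble_interior_neq0 (t : R) : Rlt (-1) t /\ Rlt t 1 -> t ^+ 2 - 1 != 0.
Proof.
move=> [/RltP H1 /RltP H2].
have : (t - 1) * (t + 1) < 0 by rewrite nmulr_rlt0 ?subr_lt0 // -ltrBlDr sub0r.
by rewrite (_ : t ^+ 2 - 1 = (t - 1) * (t + 1)); [move/lt_eqF => -> | ring].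
Qed.

Lemma ER_unisolvence (k : nat) (I : list (R * R)) (v : R -> R -> R) :
  (forall z, In z I -> (Rlt (-1) z.1 /\ Rlt z.1 1) /\ (Rlt (-1) z.2 /\ Rlt z.2 1)) ->
  ((2 <= k)%coq_nat -> unisolvent (2 * k - 3) I) ->
  inER (2 * k).+1 v ->
  (forall g, In g edges -> forall d : nat -> R,
     forall pr : Riemann_integrable
                   (fun t => v (fst (g t)) (snd (g t)) * poly1 (2 * k) d t) (-1) 1,
       RiemannInt pr = 0) ->
  (forall z, In z I -> v z.1 z.2 = 0) ->
  forall x y, inK x y -> v x y = 0.
Proof.
move=> Hinterior Hunisolv HER Hmom Hvan.
have [cQ [HcQ Hv]] := edge_moments_factor HER Hmom.
have HQ : forall x y, inK x y -> ev2 (2 * k).+3 cQ x y = 0.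
  apply: (low_degree_eq0 HcQ _ Hunisolv); first by lia.
  move=> z Hz; have [[Hx1 Hx2] [Hy1 Hy2]] := Hinterior z Hz.
  have := Hvan z Hz; rewrite Hv; last by rewrite /inK; Lra.lra.
  move/eqP; rewrite !mulf_eq0.
  by rewrite (negbTE (bubble_interior_neq0 (conj Hy1 Hy2)))
    (negbTE (bubble_interior_neq0 (conj Hx1 Hx2))) => /eqP.
by move=> x y Hxy; rewrite Hv // HQ // !mulr0.
Qed.

End EdgeElement.

Theorem theorem3p5 (k : nat) (I : list (R * R)) (v : R -> R -> R) :
  (* I: (2k-1)(k-1) interior points, unisolvent for P_{2k-3}; empty if k <= 1 *)
  length I = ((2 * k - 1) * (k - 1))%nat ->
  (forall z, In z I -> -1 < fst z < 1 /\ -1 < snd z < 1) ->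
  ((k <= 1)%nat -> I = nil) ->
  ((2 <= k)%nat -> unisolvent (2 * k - 3) I) ->
  (* v in ER_m with m = 2k+1 *)
  inER (2 * k + 1) v ->
  (* vanishing edge moments against P_{2k}(e) on every edge *)
  (forall g, In g edges -> forall d : nat -> R,
     forall pr : Riemann_integrable
                   (fun t => v (fst (g t)) (snd (g t)) * poly1 (2 * k) d t) (-1) 1,
       RiemannInt pr = 0) ->
  (* vanishing at the points of I *)
  (forall z, In z I -> v (fst z) (snd z) = 0) ->
  forall x y, inK x y -> v x y = 0.
Proof.
intros _ Hinterior _ Hunisolv HER.
rewrite Nat.add_1_r in HER.
exact (EdgeElement.ER_unisolvence Hinterior Hunisolv HER).
Qed.
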